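(* Let $\mathcal{F}_1,\dots,\mathcal{F}_k$ be finite nonempty families of convex sets in $\mathbb{R}^d$ and let $b\in\mathbb{R}^d$. If for every transversal $\mathcal{T}$ of $\mathcal{F}_1,\dots,\mathcal{F}_k$ the set $K(\mathcal{T})$ intersects the closed Euclidean unit ball $B(b,1)$, then there exist $i\in[k]$ and a point $q\in\mathbb{R}^d$ such that $d(q,K)\le\frac1{\sqrt k}$ for all $K\in\mathcal{F}_i$.
   Context: A transversal of $\mathcal{F}_1,\dots,\mathcal{F}_k$ is $\mathcal{T}=(K_1,\dots,K_k)$ with $K_i\in\mathcal{F}_i$ for all $i$, and $K(\mathcal{T})=\bigcap_{i=1}^kK_i$. $B(b,1)$ is the closed Euclidean ball of centre $b$ and radius $1$; $d(q,K)$ is Euclidean distance from a point to a set. *)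

From HB Require Import structures.
From mathcomp Require Import all_boot all_order all_algebra.
From mathcomp Require Import all_classical all_reals all_analysis.
Set Implicit Arguments. Unset Strict Implicit. Unset Printing Implicit Defensive.
Import Order.TTheory GRing.Theory Num.Theory.
Local Open Scope classical_set_scope.
Local Open Scope ring_scope.

Definition enorm (R : realType) (d : nat) (v : 'rV[R]_d) : R :=
  Num.sqrt (\sum_(i < d) (v ord0 i) ^+ 2).

Definition eball (R : realType) (d : nat) (b : 'rV[R]_d) (r : R) : set 'rV[R]_d :=
  [set x | enorm (x - b) <= r].

Definition convexR (R : realType) (d : nat) (K : set 'rV[R]_d) : Prop :=
  @convex_set R 'rV[R]_d K.

(* Euclidean distance from a point to a set, in the extended reals
   (= +oo for the empty set). *)
Definition dist_to_set (R : realType) (d : nat) (q : 'rV[R]_d) (K : set 'rV[R]_d) : \bar R :=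
  ereal_inf [set (enorm (q - x))%:E | x in K].

Definition family_transversal (R : realType) (d k : nat)
  (F : 'I_k -> set (set 'rV[R]_d)) (T : 'I_k -> set 'rV[R]_d) : Prop :=
  forall i, F i (T i).

Definition Kof (R : realType) (d k : nat) (T : 'I_k -> set 'rV[R]_d) : set 'rV[R]_d :=
  \bigcap_(i in [set: 'I_k]) T i.

(* By contradiction: suppose that for every i and every point q some member
   of F_i is at distance more than r = 1/sqrt k from q.  Starting from x = b,
   run through the indices; at step i pick K in F_i far from the current x
   and move x to an approximate nearest point p of K.  Convexity of K gives
   |x - y|^2 >= |x - p|^2 + |p - y|^2 (up to an arbitrarily small error) for
   y in K, so for every y in the intersection built so far and in B(b, 1),
   |x - y|^2 falls short of |b - y|^2 by a margin that grows by more than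
   r^2 = 1/k at each step.  After k steps the margin exceeds 1 >= |b - y|^2,
   so the final transversal has no point in B(b, 1). *)

From HB Require Import structures.
From mathcomp Require Import all_boot all_order all_algebra.
From mathcomp Require Import all_classical all_reals all_analysis.
From mathcomp Require Import ring lra.
Import Order.TTheory GRing.Theory Num.Theory.
Local Open Scope classical_set_scope.
Local Open Scope ring_scope.
Set Implicit Arguments. Unset Strict Implicit. Unset Printing Implicit Defensive.

Lemma near_minimizer (R : realType) (T : Type) (K : set T) (f : T -> R) (m delta : R) :
  K !=set0 -> (forall z, K z -> m <= f z) -> 0 < delta ->
  exists2 p, K p & forall z, K z -> f p <= f z + delta.
Proof.
move=> [z0 Kz0] lbf delta_gt0.
have infE : has_inf (f @` K).
  by split; [exists (f z0), z0 | exists m => _ [z Kz <-]; exact: lbf].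
have [_ [p Kp <-] fp_lt] := inf_adherent delta_gt0 infE.
exists p => // z Kz; apply: (le_trans (ltW fp_lt)); rewrite lerD2r.
by apply: ge_inf; [case: infE | exists z].
Qed.

Section Euclidean.
Variables (R : realType) (d : nat).
Implicit Types (u v x y z p : 'rV[R]_d) (K : set 'rV[R]_d).

Definition sqnorm v : R := \sum_(i < d) v ord0 i ^+ 2.
Definition dot u v : R := \sum_(i < d) u ord0 i * v ord0 i.

Lemma sqnorm_ge0 v : 0 <= sqnorm v.
Proof. by apply: sumr_ge0 => i _; rewrite sqr_ge0. Qed.

Lemma enorm_ge0 v : 0 <= enorm v.
Proof. exact: sqrtr_ge0. Qed.

Lemma enorm_sqr v : enorm v ^+ 2 = sqnorm v.
Proof. by rewrite sqr_sqrtr // sqnorm_ge0. Qed.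

Lemma le_enorm v (r : R) : 0 <= r -> (enorm v <= r) = (sqnorm v <= r ^+ 2).
Proof. by move=> r_ge0; rewrite -enorm_sqr ler_pXn2r // nnegrE enorm_ge0. Qed.

Lemma sqnorm_distC u v : sqnorm (u - v) = sqnorm (v - u).
Proof. by apply: eq_bigr => i _; rewrite !mxE; ring. Qed.

Lemma sqnormBZ (t : R) u v :
  sqnorm (u - t *: v) = sqnorm u - 2 * t * dot u v + t ^+ 2 * sqnorm v.
Proof.
rewrite /sqnorm /dot !mulr_sumr -sumrB -big_split /=.
by apply: eq_bigr => i _; rewrite !mxE; ring.
Qed.

Lemma sqnormB u v : sqnorm (u - v) = sqnorm u - 2 * dot u v + sqnorm v.
Proof. by rewrite -[v in LHS]scale1r sqnormBZ mulr1 expr1n mul1r. Qed.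

Lemma sqnormD_le u v : sqnorm (u + v) <= 2 * sqnorm u + 2 * sqnorm v.
Proof.
have := sqnormBZ (-1) u v; rewrite scaleN1r opprK sqrrN expr1n => ->.
have := sqnorm_ge0 (u - v); rewrite sqnormB; lra.
Qed.

Lemma sqnorm_split_le x y z : sqnorm (x - z) <= 2 * sqnorm (x - y) + 2 * sqnorm (y - z).
Proof. by rewrite -(subrKA y x (- z)) sqnormD_le. Qed.

Lemma convexR_conv K y p (t : R) :
  convexR K -> K y -> K p -> 0 <= t -> t <= 1 -> K (t *: y + (1 - t) *: p).
Proof.
move=> convK Ky Kp t_ge0 t_le1.
by have /set_mem := convK y p (Itv01 t_ge0 t_le1) (mem_set Ky) (mem_set Kp).
Qed.

(* Testing the near-minimality of p against the point of the segment [p, y]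
   at parameter t. *)
Lemma near_projection_obtuse K x p y (delta t : R) :
  convexR K -> K p -> K y -> 0 < t -> t <= 1 ->
  (forall z, K z -> sqnorm (x - p) <= sqnorm (x - z) + delta) ->
  sqnorm (x - p) + sqnorm (p - y) <= sqnorm (x - y) + t * sqnorm (p - y) + delta / t.
Proof.
move=> convK Kp Ky t_gt0 t_le1 near_min.
have := near_min _ (convexR_conv convK Ky Kp (ltW t_gt0) t_le1).
have -> : x - (t *: y + (1 - t) *: p) = (x - p) - t *: (y - p).
  by apply/rowP => i; rewrite !mxE; ring.
have -> : x - y = (x - p) - (y - p) by rewrite opprB addrA subrK.
rewrite sqnormBZ [sqnorm (x - p - _)]sqnormB [sqnorm (p - y)]sqnorm_distC.
set D := dot _ _; set V := sqnorm (y - p) => lin_t.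
have quad_t : 2 * D <= t * V + delta / t.
  rewrite -(ler_pM2l t_gt0) mulrDr [t * (delta / t)]mulrC divfK ?gt_eqF //; nra.
lra.
Qed.

Lemma approx_projection K x (M eps : R) :
  convexR K -> K !=set0 -> 0 <= M -> 0 < eps ->
  exists2 p, K p & forall y, K y -> sqnorm (x - y) <= M ->
    sqnorm (x - p) + sqnorm (p - y) <= sqnorm (x - y) + eps.
Proof.
move=> convK Kne M_ge0; wlog eps_le1 : eps / eps <= 1 => [small_eps eps_gt0|eps_gt0].
  have [||p Kp near_p] := small_eps (Num.min eps 1).
  - by rewrite ge_min lexx orbT.
  - by rewrite lt_min eps_gt0 ltr01.
  exists p => // y Ky yM; apply: le_trans (near_p y Ky yM) _.
  by rewrite lerD2l ge_min lexx.
have [z0 Kz0] := Kne.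
set L := 2 * (sqnorm (x - z0) + 1) + 2 * M.
have L_ge0 : 0 <= L by have := sqnorm_ge0 (x - z0); rewrite /L; lra.
set t := eps / (2 * (L + 1)).
have t_gt0 : 0 < t by rewrite divr_gt0 //; lra.
have tL : t * (2 * (L + 1)) = eps by rewrite mulfVK //; lra.
have t_le1 : t <= 1 by nra.
set delta := t * eps / 2.
have delta_gt0 : 0 < delta by rewrite divr_gt0 // mulr_gt0.
have delta_le1 : delta <= 1 by rewrite /delta; nra.
have delta_t : delta / t = eps / 2 by rewrite /delta; field; rewrite gt_eqF.
have [p Kp near_min] :=
  near_minimizer (f := fun z => sqnorm (x - z)) Kne (fun z _ => sqnorm_ge0 _) delta_gt0.
exists p => // y Ky yM.
have := near_projection_obtuse convK Kp Ky t_gt0 t_le1 near_min.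
have := near_min z0 Kz0; have := sqnorm_split_le p x y.
rewrite [sqnorm (p - x)]sqnorm_distC delta_t => pyL xpz0 obtuse.
have py_le_L : sqnorm (p - y) <= L by rewrite /L; lra.
have : t * sqnorm (p - y) <= eps / 2 by nra.
lra.
Qed.

Lemma dist_to_set_gt x K (r : R) : 0 <= r -> (r%:E < dist_to_set x K)%E ->
  exists2 c, r ^+ 2 < c & forall z, K z -> c <= sqnorm (x - z).
Proof.
move=> r_ge0; have lb z : K z -> (dist_to_set x K <= (enorm (x - z))%:E)%E.
  by move=> Kz; apply: ereal_inf_lbound; exists z.
case: (dist_to_set x K) lb => [D||] lb //; rewrite ?lte_fin => rD.
- have D_ge0 : 0 <= D by apply: le_trans (ltW rD).
  exists (D ^+ 2) => [|z /lb]; first by rewrite ltr_pXn2r // nnegrE.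
  by rewrite lee_fin -enorm_sqr => Dz; rewrite ler_pXn2r // nnegrE enorm_ge0.
- by exists (r ^+ 2 + 1) => [|z /lb]; rewrite ?ltrDl // leye_eq.
Qed.

Variable b : 'rV[R]_d.

Definition closer_by (s : R) (A : set 'rV[R]_d) x :=
  forall y, A y -> sqnorm (b - y) <= 1 -> s + sqnorm (x - y) <= sqnorm (b - y).

Lemma closer_by0 A : closer_by 0 A b.
Proof. by move=> y _ _; rewrite add0r. Qed.

Lemma closer_by_sub s A A' x : A' `<=` A -> closer_by s A x -> closer_by s A' x.
Proof. by move=> A'A closer y /A'A; exact: closer. Qed.

Lemma closer_by_step s c eps A K x :
  convexR K -> (forall z, K z -> c <= sqnorm (x - z)) -> 0 < eps ->
  closer_by s A x -> exists x', closer_by (s + c - eps) (A `&` K) x'.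
Proof.
move=> convK far_K eps_gt0 closer.
have [Kne|K0] := pselect (K !=set0); last by exists x => y [_ Ky]; case: K0; exists y.
have M_ge0 : 0 <= 2 * sqnorm (x - b) + 2 by have := sqnorm_ge0 (x - b); lra.
have [p Kp near_p] := approx_projection x convK Kne M_ge0 eps_gt0.
exists p => y [Ay Ky] yb.
have xy_M : sqnorm (x - y) <= 2 * sqnorm (x - b) + 2.
  by have := sqnorm_split_le x b y; lra.
by have := near_p y Ky xy_M; have := closer y Ay yb; have := far_K p Kp; lra.
Qed.

Lemma closer_by_gt1 s A x : 1 < s -> closer_by s A x -> ~ (A `&` eball b 1 !=set0).
Proof.
move=> s_gt1 closer [y [Ay]]; rewrite /eball /= le_enorm // expr1n sqnorm_distC => yb.
by have := closer y Ay yb; have := sqnorm_ge0 (x - y); lra.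
Qed.

End Euclidean.

Section FarFamilies.
Variables (R : realType) (d k : nat) (F : 'I_k -> set (set 'rV[R]_d)) (b : 'rV[R]_d).
Hypothesis F_ne : forall i, F i !=set0.
Hypothesis F_convex : forall i K, F i K -> convexR K.
Hypothesis F_far : forall i q,
  exists2 K, F i K & ((1 / Num.sqrt k%:R)%:E < dist_to_set q K)%E.

Lemma far_step i s A x : closer_by b s A x ->
  exists K x' s', [/\ F i K, s + k%:R^-1 < s' & closer_by b s' (A `&` K) x'].
Proof.
move=> closer; have [K FK farK] := F_far i x.
have r_ge0 : 0 <= 1 / Num.sqrt k%:R :> R by rewrite divr_ge0 ?sqrtr_ge0.
have [c rc far_c] := dist_to_set_gt r_ge0 farK.
move: rc; rewrite expr_div_n expr1n sqr_sqrtr // div1r => kc.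
have eps_gt0 : 0 < (c - k%:R^-1) / 2 by rewrite divr_gt0 // subr_gt0.
have [x' closer'] := closer_by_step (F_convex FK) far_c eps_gt0 closer.
by exists K, x', (s + c - (c - k%:R^-1) / 2); split => //; lra.
Qed.

Definition prefix_cap (T : 'I_k -> set 'rV[R]_d) (n : nat) :=
  [set y | forall j : 'I_k, (j < n)%N -> T j y].

Definition stage (n : nat) (s : R) :=
  exists T x, family_transversal F T /\ closer_by b s (prefix_cap T n) x.

Lemma stage0 : stage 0 0.
Proof.
have /choice [T FT] : forall i, exists K, F i K by move=> i; exact: F_ne.
by exists T, b; split => //; exact: closer_by0.
Qed.

Lemma stage_succ n s : (n < k)%N -> stage n s ->
  exists2 s', s + k%:R^-1 < s' & stage n.+1 s'.
Proof.
move=> n_lt_k [T [x [FT closer]]]; pose i := Ordinal n_lt_k.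
have [K [x' [s' [FK ss' closer']]]] := far_step i closer.
exists s' => //; exists (fun j => if j == i then K else T j), x'; split.
  by move=> j; case: eqP => [->|_]; [exact: FK | exact: FT].
apply: closer_by_sub closer' => y cap_y; split.
  by move=> j j_lt_n; have := cap_y j (ltnW j_lt_n); rewrite -val_eqE /= ltn_eqF.
by have := cap_y i (ltnSn n); rewrite eqxx.
Qed.

Lemma stage_prefix n : (n <= k)%N -> exists2 s, n%:R / k%:R <= s & stage n s.
Proof.
elim: n => [|n IHn] n_le_k; first by exists 0; [rewrite mul0r | exact: stage0].
have [s ns st] := IHn (ltnW n_le_k).
have [s' ss' st'] := stage_succ n_le_k st.
by exists s' => //; rewrite -natr1 mulrDl div1r; lra.
Qed.

Lemma far_transversal_misses_ball : (0 < k)%N ->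
  exists T, family_transversal F T /\ ~ (Kof T `&` eball b 1 !=set0).
Proof.
move=> k_gt0; have k1_lt_k : (k.-1 < k)%N by rewrite ltn_predL.
have [s ks st] := stage_prefix (ltnW k1_lt_k).
have [s' ss' [T [x [FT closer]]]] := stage_succ k1_lt_k st.
exists T; split => //; apply: closer_by_gt1 (closer_by_sub _ closer).
  have : k.-1%:R / k%:R + k%:R^-1 = 1 :> R.
    by rewrite -[X in _ + X]div1r -mulrDl natr1 prednK // divff // pnatr_eq0 -lt0n.
  lra.
by move=> y Ky j _; exact: Ky.
Qed.

End FarFamilies.

Theorem theorem4p2 (R : realType) (d k : nat) (F : 'I_k -> set (set 'rV[R]_d))
    (b : 'rV[R]_d) :
  (0 < k)%N ->
  (forall i, finite_set (F i)) ->
  (forall i, F i !=set0) ->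
  (forall i K, F i K -> convexR K) ->
  (forall T, family_transversal F T -> Kof T `&` eball b 1 !=set0) ->
  exists (i : 'I_k) (q : 'rV[R]_d),
    forall K, F i K -> (dist_to_set q K <= (1 / Num.sqrt (k%:R))%:E)%E.
Proof.
move=> k_gt0 _ F_ne F_convex meets_ball; apply: contrapT => no_center.
have F_far i q : exists2 K, F i K & ((1 / Num.sqrt k%:R)%:E < dist_to_set q K)%E.
  apply: contrapT => near_all; apply: no_center; exists i, q => K FK.
  by rewrite leNgt; apply/negP => far_K; apply: near_all; exists K.
have [T [FT misses]] := far_transversal_misses_ball b F_ne F_convex F_far k_gt0.
exact: misses (meets_ball T FT).
Qed.
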